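(* Let $A$ be a Banach space and let $L$ be a seminorm defined on a dense subspace $\mathrm{dom}(L)$ of $A$ such that $K:=\{a\in \mathrm{dom}(L) : L(a)=0\}$ is finite dimensional, and such that the image of $\{a\in \mathrm{dom}(L) : L(a)\leq 1\}$ under the canonical surjection $A\to A/K$ is compact in $A/K$ (with $A/K$ endowed with the quotient norm). Then $A$ is finite dimensional if and only if $\mathrm{dom}(L)=A$. *)

From HB Require Import structures.
From mathcomp Require Import all_boot all_order all_algebra.
From mathcomp Require Import all_classical all_reals all_analysis.
Set Implicit Arguments. Unset Strict Implicit. Unset Printing Implicit Defensive.
Import Order.TTheory GRing.Theory Num.Theory.
Import numFieldNormedType.Exports.
Local Open Scope classical_set_scope.
Local Open Scope ring_scope.

Section Defs.
Context {R : realType} {V : normedModType R}.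

Definition is_subspace (S : set V) : Prop :=
  S 0 /\ (forall (a : R) (x y : V), S x -> S y -> S (a *: x + y)).

(* L is a seminorm on the subspace D (its values off D are irrelevant) *)
Definition seminorm_on (D : set V) (L : V -> R) : Prop :=
  (forall x y, D x -> D y -> L (x + y) <= L x + L y) /\
  (forall (a : R) x, D x -> L (a *: x) = `|a| * L x).

Definition fin_dim (S : set V) : Prop :=
  exists (n : nat) (v : 'I_n -> V), (forall i, S (v i)) /\
    (forall x, S x -> exists c : 'I_n -> R, x = \sum_(i < n) c i *: v i).

(* quotient norm of the class of x in V/K : inf_{k in K} |x - k| *)
Definition qnorm (K : set V) (x : V) : R := inf [set `|x - k| | k in K].

(* open sets of V/K, pulled back along the canonical surjection V -> V/K
   (V/K carrying the topology of the quotient norm) *)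
Definition qopen (K : set V) (U : set V) : Prop :=
  forall x, U x -> exists2 e : R, 0 < e & forall y, qnorm K (y - x) < e -> U y.

(* the image of B under V -> V/K is compact in the normed space V/K:
   every cover of it by open subsets of V/K has a finite subcover
   (stated for the preimages in V of those open sets) *)
Definition qcompact (K : set V) (B : set V) : Prop :=
  forall (I : Type) (U : I -> set V), (forall i, qopen K (U i)) ->
    B `<=` \bigcup_i U i ->
    exists F : set I, finite_set F /\ B `<=` \bigcup_(i in F) U i.

End Defs.

From HB Require Import structures.
From mathcomp Require Import all_boot all_order all_algebra.
From mathcomp Require Import all_classical all_reals all_analysis.
From mathcomp Require Import ring lra.
Import Order.TTheory GRing.Theory Num.Theory.
Import numFieldNormedType.Exports.
Local Open Scope classical_set_scope.
Local Open Scope ring_scope.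

(* If A is finite dimensional, so is the dense subspace dom(L); finite-dimensional
   subspaces of a normed space are closed, hence dom(L) = A.
   Conversely, let L be defined everywhere. Compactness of the L-unit ball modulo
   K makes every level set [L <= c] closed, so by Baire one of them contains a
   ball, and then [L <= 1] contains a ball of some radius mu around 0. A finite
   (mu/4)-net of the L-unit ball modulo K together with a basis of K spans a
   closed finite-dimensional subspace W with dist(y, W) <= |y|/2 for every y,
   and such a W must be all of A. *)

Section Subspaces.
Context {R : realType} {V : normedModType R}.
Implicit Types (S T : set V) (s : seq V).

Lemma subspaceD {S x y} : is_subspace S -> S x -> S y -> S (x + y).
Proof. by case=> _ SZD Sx Sy; have := SZD 1 x y Sx Sy; rewrite scale1r. Qed.

Lemma subspaceZ {S} a {x} : is_subspace S -> S x -> S (a *: x).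
Proof. by case=> S0 SZD Sx; have := SZD a x 0 Sx S0; rewrite addr0. Qed.

Lemma subspaceB {S x y} : is_subspace S -> S x -> S y -> S (x - y).
Proof.
by move=> sS Sx Sy; rewrite -scaleN1r; apply: subspaceD => //; apply: subspaceZ.
Qed.

Lemma subspace_sum S n (v : 'I_n -> V) (c : 'I_n -> R) :
  is_subspace S -> (forall i, S (v i)) -> S (\sum_(i < n) c i *: v i).
Proof.
move=> sS Sv; apply: (big_ind S); first by case: sS.
  by move=> x y; apply: subspaceD.
by move=> i _; apply: subspaceZ.
Qed.

Lemma subspaceI {S T} : is_subspace S -> is_subspace T -> is_subspace (S `&` T).
Proof.
move=> [S0 SZD] [T0 TZD]; split=> // a x y [Sx Tx] [Sy Ty].
by split; [apply: SZD | apply: TZD].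
Qed.

Definition add_line S v : set V := [set x | exists t y, S y /\ x = t *: v + y].

Lemma subspace_add_line S v : is_subspace S -> is_subspace (add_line S v).
Proof.
move=> sS; split; first by exists 0, 0; rewrite scale0r addr0; case: sS.
move=> a _ _ [t [y [Sy ->]]] [t' [y' [Sy' ->]]].
exists (a * t + t'), (a *: y + y'); split; first by case: sS => _; apply.
by rewrite scalerDr scalerA addrACA -scalerDl.
Qed.

Lemma add_line_id S v : is_subspace S -> S v -> add_line S v = S.
Proof.
move=> sS Sv; apply/seteqP; split=> [_ [t [y [Sy ->]]]|x Sx].
  by apply: subspaceD => //; apply: subspaceZ.
by exists 0, x; rewrite scale0r add0r.
Qed.

Lemma subspace_add_line_split {S T v d} :
  is_subspace S -> is_subspace T -> S `<=` add_line T v -> S d -> ~ T d ->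
  S = add_line (S `&` T) d.
Proof.
move=> sS sT SvT Sd nTd; have [c [y0 [Ty0 dE]]] := SvT _ Sd.
have c0 : c != 0.
  by apply: contra_notN nTd => /eqP c0; rewrite dE c0 scale0r add0r.
apply/seteqP; split=> [x Sx|_ [t [y [[Sy _] ->]]]]; last first.
  by apply: subspaceD => //; apply: subspaceZ.
have [c' [y [Ty xE]]] := SvT _ Sx.
exists (c' / c), (x - c' / c *: d); split; last by rewrite addrC subrK.
split; first by apply: subspaceB => //; apply: subspaceZ.
have -> : x - c' / c *: d = y - c' / c *: y0.
  by rewrite xE dE scalerDr scalerA divfK // opprD addrACA subrr add0r.
by apply: subspaceB => //; apply: subspaceZ.
Qed.

Fixpoint seq_span s : set V :=
  if s is v :: s' then add_line (seq_span s') v else [set 0].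

Lemma subspace_seq_span s : is_subspace (seq_span s).
Proof.
elim: s => [|v s IH] /=; last exact: subspace_add_line.
by split=> // a _ _ -> ->; rewrite scaler0 addr0.
Qed.

Lemma seq_span_mem s v : v \in s -> seq_span s v.
Proof.
elim: s => [//|w s IH]; rewrite inE => /orP[/eqP ->|vs] /=.
  by exists 1, 0; rewrite scale1r addr0; case: (subspace_seq_span s).
by exists 0, v; rewrite scale0r add0r; split => //; apply: IH.
Qed.

Lemma seq_span_min S s : is_subspace S -> (forall v, v \in s -> S v) ->
  seq_span s `<=` S.
Proof.
move=> sS; elim: s => [_ _ -> | v s IH sS' _ [t [y [sy ->]]]]; first by case: sS.
apply: subspaceD => //; first by apply: subspaceZ => //; apply: sS'; rewrite inE eqxx.
by apply: IH sy => u us; apply: sS'; rewrite inE us orbT.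
Qed.

Lemma seq_span_coord s x : seq_span s x ->
  exists c : 'I_(size s) -> R, x = \sum_(i < size s) c i *: s`_i.
Proof.
elim: s x => [|v s IH] x /=; first by move->; exists (fun=> 0); rewrite big_ord0.
move=> [t [y [sy ->]]]; have [c ->] := IH _ sy.
exists (fun i : 'I_(size s).+1 => if unlift ord0 i is Some j then c j else t).
rewrite big_ord_recl /= unlift_none; congr (_ + _).
by apply: eq_bigr => i _; rewrite liftK.
Qed.

Lemma fin_dim_seq_span s : fin_dim (seq_span s).
Proof.
exists (size s), (fun i => s`_i); split; last exact: seq_span_coord.
by move=> i; apply/seq_span_mem/mem_nth.
Qed.

Lemma fin_dim_sub_seq_span {S} : fin_dim S ->
  exists2 s, (forall v, v \in s -> S v) & S `<=` seq_span s.
Proof.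
move=> [n [v [Sv Scoord]]]; exists [seq v i | i <- enum 'I_n].
  by move=> _ /mapP[i _ ->].
move=> x /Scoord[c ->]; apply: subspace_sum; first exact: subspace_seq_span.
by move=> i; apply/seq_span_mem/map_f; rewrite mem_enum.
Qed.

Lemma fin_dim_seq_spanP {S} : is_subspace S -> fin_dim S ->
  exists s, S = seq_span s.
Proof.
move=> sS /fin_dim_sub_seq_span[s sS' Ss]; exists s.
by apply/seteqP; split => //; apply: seq_span_min.
Qed.

Lemma subspace_sub_seq_span {S s} : is_subspace S -> S `<=` seq_span s ->
  exists w, S = seq_span w.
Proof.
elim: s S => [|v s IH] S sS Ss.
  by exists [::]; apply/seteqP; split => // _ ->; case: sS.
have [w ST] := IH _ (subspaceI sS (subspace_seq_span s)) (@subIsetr _ _ _).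
have [Ss'|] := pselect (S `<=` seq_span s); first by exists w; rewrite -ST setIidl.
move=> /existsNP[d /not_implyP[Sd nTd]]; exists (d :: w) => /=.
by rewrite -ST; apply: subspace_add_line_split sS (subspace_seq_span s) Ss Sd nTd.
Qed.

Lemma fin_dim_subspace {S T} : is_subspace S -> S `<=` T -> fin_dim T -> fin_dim S.
Proof.
move=> sS ST /fin_dim_sub_seq_span[s _ Ts].
have [w ->] := subspace_sub_seq_span sS (subset_trans ST Ts).
exact: fin_dim_seq_span.
Qed.

End Subspaces.

Lemma real_cauchy_limit {R : realType} {T : R -> set R} :
  (forall e, 0 < e -> exists t, T e t) ->
  (forall e e' t t', T e t -> T e' t' -> `|t - t'| <= e + e') ->
  exists l, forall e t, T e t -> `|l - t| <= e.
Proof.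
move=> T_ne T_close; pose S := [set s | exists e t, T e t /\ s = t - e].
have ubS e' t' : T e' t' -> ubound S (t' + e').
  move=> Tt' _ [e [t [Tt ->]]]; have := T_close _ _ _ _ Tt Tt'.
  by rewrite ler_norml => /andP[_]; lra.
have [t1 Tt1] := T_ne 1 ltr01.
have S_ne : S !=set0 by exists (t1 - 1), 1, t1.
exists (sup S) => e t Tt; rewrite ler_norml; apply/andP; split.
  suff : t - e <= sup S by lra.
  by apply: sup_upper_bound; [split; [|exists (t1 + 1); apply: ubS] | exists e, t].
suff : sup S <= t + e by lra.
exact: ge_sup S_ne (ubS _ _ Tt).
Qed.

Section Closed.
Context {R : realType} {V : normedModType R}.
Implicit Types (S : set V) (s : seq V).

Lemma closed_normP S :
  closed S <-> (forall x, (forall e, 0 < e -> exists y, S y /\ `|x - y| < e) -> S x).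
Proof.
split=> [cS x Sx | Sclosure x clx].
  apply: cS => B /nbhs_ballP[e e0 sB].
  have [y [Sy xy]] := Sx e e0; exists y; split => //; apply: sB.
  by rewrite -ball_normE.
apply: Sclosure => e e0.
have [y [Sy By]] : S `&` ball x e !=set0 by apply: clx; apply/nbhs_ballP; exists e.
by exists y; split => //; move: By; rewrite -ball_normE.
Qed.

Lemma closed_dist_gt0 {S v} : closed S -> ~ S v ->
  exists2 d, 0 < d & forall y, S y -> d <= `|v - y|.
Proof.
move=> cS nSv; apply: contrapT => nd; apply/nSv/(closed_normP S).1 => // e e0.
apply: contrapT => ne; apply: nd; exists e => // y Sy; rewrite leNgt.
by apply/negP => ve; apply: ne; exists y.
Qed.

Lemma closed_dense_eqT {S} : closed S -> dense S -> S = setT.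
Proof.
move=> cS dS; apply/seteqP; split => // x _; apply/(closed_normP S).1 => // e e0.
have [y [bxy Sy]] : ball x e `&` S !=set0.
  by apply: dS; [exists x; exact: ballxx | exact: ball_open].
by exists y; split => //; move: bxy; rewrite -ball_normE.
Qed.

Lemma norm_add_line_ge {S v d} t {y} : is_subspace S ->
  (forall z, S z -> d <= `|v - z|) -> S y -> `|t| * d <= `|t *: v + y|.
Proof.
move=> sS dv Sy; have [->|t0] := eqVneq t 0; first by rewrite normr0 mul0r.
have -> : t *: v + y = t *: (v - (- t^-1) *: y).
  by rewrite scaleNr opprK scalerDr scalerA divff // scale1r.
by rewrite normrZ ler_wpM2l //; apply: dv; apply: subspaceZ.
Qed.

(* With d = dist(v, S) > 0 the coefficient t of t v + y is (1/d)-Lipschitz, so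
   the coefficients of approximations of a limit point converge. *)
Lemma closed_add_line S v : is_subspace S -> closed S -> closed (add_line S v).
Proof.
move=> sS cS; have [Sv|nSv] := pselect (S v); first by rewrite add_line_id.
have [d d0 dv] := closed_dist_gt0 cS nSv.
apply/closed_normP => x Sx.
pose T e := [set t | exists2 y, S y & `|x - (t *: v + y)| < e * d].
have T_ne e : 0 < e -> exists t, T e t.
  move=> e0; have [_ [[t [y [Sy ->]]] xty]] := Sx _ (mulr_gt0 e0 d0).
  by exists t, y.
have T_close e e' t t' : T e t -> T e' t' -> `|t - t'| <= e + e'.
  move=> [y Sy ty] [y' Sy' ty']; rewrite -(ler_pM2r d0) mulrDl.
  apply: (le_trans (norm_add_line_ge (t - t') sS dv (subspaceB sS Sy Sy'))).
  have -> : (t - t') *: v + (y - y') = (x - (t' *: v + y')) - (x - (t *: v + y)).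
    by rewrite scalerBl opprB [RHS]addrC [RHS]addrA subrK opprD addrACA.
  by rewrite (le_trans (ler_normB _ _)) // addrC lerD // ltW.
have [l Tl] := real_cauchy_limit T_ne T_close.
exists l, (x - l *: v); split; last by rewrite addrC subrK.
apply/(closed_normP S).1 => // eps eps0.
have dv0 : 0 < d + `|v| by rewrite ltr_wpDr.
pose e := eps / (d + `|v|); have e0 : 0 < e by rewrite divr_gt0.
have [t [y Sy xty]] := T_ne e e0; have lt := Tl e t (ex_intro2 _ _ y Sy xty).
exists y; split => //.
have -> : x - l *: v - y = (x - (t *: v + y)) + (t - l) *: v.
  by rewrite scalerBl opprD !addrA (addrAC (x - t *: v)) subrK addrAC.
rewrite (le_lt_trans (ler_normD _ _)) // normrZ [`|t - l|]distrC.
have : `|l - t| * `|v| <= e * `|v| by rewrite ler_wpM2r.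
have : e * d + e * `|v| = eps by rewrite -mulrDr divfK ?gt_eqF.
lra.
Qed.

Lemma closed_seq_span s : closed (seq_span s).
Proof.
elim: s => [|v s IH] /=; last exact/closed_add_line/IH/subspace_seq_span.
exact/accessible_closed_set1/hausdorff_accessible/norm_hausdorff.
Qed.

Lemma closed_fin_dim {S} : is_subspace S -> fin_dim S -> closed S.
Proof. by move=> sS /(fin_dim_seq_spanP sS)[s ->]; apply: closed_seq_span. Qed.

Lemma subspace_halving_eqT S : is_subspace S -> closed S ->
  (forall y, exists2 w, S w & `|y - w| <= `|y| / 2) -> S = setT.
Proof.
move=> sS cS half.
have iter x k : exists2 w, S w & `|x - w| <= `|x| / 2 ^+ k.
  elim: k => [|k [w Sw xw]].
    by exists 0; [case: sS | rewrite subr0 expr0 divr1].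
  have [w' Sw' xww'] := half (x - w); exists (w + w'); first exact: subspaceD.
  by rewrite opprD addrA exprSr invfM mulrA (le_trans xww') // ler_pM2r.
apply/seteqP; split => // x _; apply/(closed_normP S).1 => // e e0.
pose k := Num.truncn (`|x| / e).
have [w Sw xw] := iter x k; exists w; split => //; apply: (le_lt_trans xw).
have k_lt : `|x| / e < k.+1%:R by apply: truncnS_gt.
have k_le : k.+1%:R <= 2 ^+ k :> R by rewrite -natrX ler_nat ltn_expl.
rewrite ltr_pdivrMr ?exprn_gt0 // mulrC; rewrite ltr_pdivrMr // in k_lt.
by rewrite (lt_le_trans k_lt) // ler_pM2r.
Qed.

End Closed.

Section QuotientNorm.
Context {R : realType} {V : normedModType R} {K : set V}.
Hypothesis sK : is_subspace K.

Let qnorm_set_neq0 x : [set `|x - k| | k in K] !=set0.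
Proof. by exists `|x - 0|, 0 => //; case: sK. Qed.

Let qnorm_set_lbound x : has_lbound [set `|x - k| | k in K].
Proof. by exists 0 => _ [k _ <-]. Qed.

Lemma qnorm_ge0 x : 0 <= qnorm K x.
Proof. by apply: lb_le_inf => // _ [k _ <-]. Qed.

Lemma qnorm_le x {k} : K k -> qnorm K x <= `|x - k|.
Proof. by move=> Kk; apply: ge_inf => //; exists k. Qed.

Lemma qnorm_lt x e : qnorm K x < e -> exists2 k, K k & `|x - k| < e.
Proof. by move=> /(inf_lt (qnorm_set_neq0 x))[_ [k Kk <-] xk]; exists k. Qed.

Lemma qnorm_le_norm x : qnorm K x <= `|x|.
Proof. by rewrite -[X in `|X|]subr0; apply: qnorm_le; case: sK. Qed.

Lemma qnormD x y : qnorm K (x + y) <= qnorm K x + qnorm K y.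
Proof.
apply/ler_addgt0Pr => e e0; have e20 : 0 < e / 2 by rewrite divr_gt0.
have [k Kk xk] : exists2 k, K k & `|x - k| < qnorm K x + e / 2.
  by apply: qnorm_lt; rewrite ltrDl.
have [k' Kk' yk'] : exists2 k, K k & `|y - k| < qnorm K y + e / 2.
  by apply: qnorm_lt; rewrite ltrDl.
apply: (le_trans (qnorm_le (x + y) (subspaceD sK Kk Kk'))).
rewrite opprD addrACA (le_trans (ler_normD _ _)) //; lra.
Qed.

Lemma qnorm_distD x y z : qnorm K (x - z) <= qnorm K (x - y) + qnorm K (y - z).
Proof. by have := qnormD (x - y) (y - z); rewrite addrA subrK. Qed.

Lemma qnorm_eq0 {x} : closed K -> qnorm K x = 0 -> K x.
Proof.
move=> cK x0; apply/(closed_normP K).1 => // e e0.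
by have [k Kk xk] := qnorm_lt x e ltac:(by rewrite x0); exists k.
Qed.

Lemma qopen_qnorm_lt b e : qopen K [set y | qnorm K (y - b) < e].
Proof.
move=> x /= xb; exists (e - qnorm K (x - b)); first by rewrite subr_gt0.
by move=> y /= yx; have := qnorm_distD y x b; lra.
Qed.

Lemma qopen_qnorm_gt x e : qopen K [set y | e < qnorm K (x - y)].
Proof.
move=> y /= xy; exists (qnorm K (x - y) - e); first by rewrite subr_gt0.
by move=> z /= zy; have := qnorm_distD x z y; lra.
Qed.

Lemma qcompact_net {B e} : qcompact K B -> 0 < e ->
  exists s : seq V, forall b, B b -> exists2 a, a \in s & qnorm K (b - a) < e.
Proof.
move=> cB e0; have [|F [finF BF]] := cB V _ (fun a => qopen_qnorm_lt a e).
  move=> b _; exists b => //=; rewrite subrr.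
  by apply: le_lt_trans (qnorm_le_norm 0) _; rewrite normr0.
have [s Fs] := (finite_seqP F).1 finF.
by exists s => b /BF[a + ba]; rewrite Fs => sa; exists a.
Qed.

(* Cover B by the increasing open sets [1/(m+1) < qnorm K (x - y)]. *)
Lemma qcompact_qdist_gt0 {B} x : qcompact K B ->
  (forall b, B b -> 0 < qnorm K (x - b)) ->
  exists2 r, 0 < r & forall b, B b -> r <= qnorm K (x - b).
Proof.
move=> cB xB; pose U m := [set y | m.+1%:R^-1 < qnorm K (x - y)].
have [|F [finF BF]] := cB nat U (fun m => qopen_qnorm_gt x _).
  move=> b Bb; exists (Num.truncn (qnorm K (x - b))^-1) => //; rewrite /U /=.
  rewrite -[ltRHS]invrK ltf_pV2 ?posrE ?invr_gt0 ?xB //.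
  exact: truncnS_gt.
have [s Fs] := (finite_seqP F).1 finF; pose M := (\max_(m <- s) m)%N.
exists M.+1%:R^-1 => // b /BF[m Fm /= Um]; apply/ltW/le_lt_trans/Um.
rewrite lef_pV2 ?posrE // ler_nat ltnS.
by apply: (@leq_bigmax_seq _ _ xpredT id); rewrite Fs in Fm.
Qed.

End QuotientNorm.

Lemma Baire_closed_cover {R : realType} {A : completeNormedModType R}
    {F : nat -> set A} :
  (forall n, closed (F n)) -> \bigcup_n F n = setT ->
  exists n x r, 0 < r /\ forall y, `|x - y| < r -> F n y.
Proof.
move=> cF covF; have [n ndense] : exists n, ~ dense (~` F n).
  apply: contrapT => /forallNP alldense.
  suff : dense (\bigcap_n ~` F n) by rewrite -setC_bigcup covF setCT; apply: dense0.
  by apply: Baire => n; split; [rewrite openC | apply: contrapT].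
have [W [[x /open_nbhs_nbhs/nbhs_ballP[r r0 xrW]] WF]] := denseNE ndense.
exists n, x, r; split => // y xy; apply: contrapT => nFy.
have : (W `&` ~` F n) y by split => //; apply: xrW; rewrite -ball_normE.
by rewrite WF.
Qed.

Section SeminormWithCompactUnitBall.
Context {R : realType} {A : completeNormedModType R} {L : A -> R}.
Hypothesis LD : forall x y, L (x + y) <= L x + L y.
Hypothesis LZ : forall a x, L (a *: x) = `|a| * L x.
Let K := [set a | L a = 0].
Hypothesis finK : fin_dim K.
Hypothesis cptB : qcompact K [set a | L a <= 1].

Let L0 : L 0 = 0.
Proof. by have := LZ 0 0; rewrite scale0r normr0 mul0r. Qed.

Let LN x : L (- x) = L x.
Proof. by rewrite -scaleN1r LZ normrN normr1 mul1r. Qed.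

Let L_ge0 x : 0 <= L x.
Proof. by have := LD x (- x); rewrite subrr L0 LN; lra. Qed.

Let subspaceK : is_subspace K.
Proof.
split=> [|a x y Kx Ky]; first exact: L0.
by apply/eqP; rewrite eq_le L_ge0 andbT (le_trans (LD _ _)) // LZ Kx Ky mulr0 addr0.
Qed.

Let closedK : closed K.
Proof. exact: closed_fin_dim subspaceK finK. Qed.

(* A point with [1 < L x] has positive quotient distance to every point of the
   unit ball, hence by compactness a positive distance to the whole ball. *)
Lemma closed_seminorm_le1 : closed [set x | L x <= 1].
Proof.
apply/closed_normP => x Bx; rewrite /= leNgt; apply/negP => Lx1.
have [|r r0 rB] := qcompact_qdist_gt0 subspaceK x cptB.
  move=> b /= Lb; rewrite lt_def qnorm_ge0 // andbT.
  apply/eqP => /(qnorm_eq0 subspaceK closedK) /= Kxb.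
  by have := LD b (x - b); rewrite [b + _]addrC subrK Kxb addr0; lra.
have [y [Ly xy]] := Bx r r0.
by have := rB y Ly; have := qnorm_le_norm subspaceK (x - y); lra.
Qed.

Lemma closed_seminorm_le c : 0 < c -> closed [set x | L x <= c].
Proof.
move=> c0; apply/closed_normP => x Bx.
have ic0 : 0 < c^-1 by rewrite invr_gt0.
suff : [set x | L x <= 1] (c^-1 *: x).
  by rewrite /= LZ gtr0_norm // ler_pdivrMl // mulr1.
apply: (closed_normP _).1 => [|e e0]; first exact: closed_seminorm_le1.
have [y [Ly xy]] := Bx (c * e) (mulr_gt0 c0 e0).
exists (c^-1 *: y); split; first by rewrite /= LZ gtr0_norm // ler_pdivrMl // mulr1.
by rewrite -scalerBr normrZ gtr0_norm // ltr_pdivrMl.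
Qed.

(* Baire puts a ball B(x, r) inside some [L <= n+1], and
   [L (2 y) <= L (x + y) + L (x - y)] recenters it at 0. *)
Lemma seminorm_le1_near0 : exists2 mu, 0 < mu & forall y, `|y| < mu -> L y <= 1.
Proof.
have [|n [x [r [r0 xrL]]]] :=
    Baire_closed_cover (fun n => closed_seminorm_le _ (ltr0Sn R n)).
  apply/seteqP; split => // x _; exists (Num.truncn (L x)) => //.
  exact/ltW/truncnS_gt.
pose N : R := n.+1%:R; have N0 : 0 < N := ltr0Sn R n.
exists (r / N) => [|y]; first exact: divr_gt0.
rewrite ltr_pdivlMr // => yr; pose z := N *: y.
have zr : `|z| < r by rewrite normrZ gtr0_norm // mulrC.
have Lxz : L (x + z) <= N by apply: xrL; rewrite opprD addrA subrr sub0r normrN.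
have Lxz' : L (x - z) <= N by apply: xrL; rewrite opprB addrCA subrr addr0.
have : L (2 *: z) <= L (x + z) + L (x - z).
  by rewrite -(LN (x - z)) (le_trans _ (LD _ _)) // opprB addrC addrA subrK scaler_nat.
rewrite /z scalerA LZ gtr0_norm ?mulr_gt0 // -mulrA.
by move=> L2z; rewrite -(ler_pM2l N0) mulr1 -(ler_pM2l (ltr0Sn R 1)); lra.
Qed.

Lemma seminorm_halving_span :
  exists s : seq A, forall y, exists2 w, seq_span s w & `|y - w| <= `|y| / 2.
Proof.
have [mu mu0 Lmu] := seminorm_le1_near0.
have rho0 : 0 < mu / 4 by rewrite divr_gt0.
have [sa net] := qcompact_net subspaceK cptB rho0.
have [sk Kspan] := fin_dim_seq_spanP subspaceK finK.
exists (sa ++ sk) => y; have sW := subspace_seq_span (sa ++ sk).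
have [->|y0] := eqVneq y 0.
  by exists 0; [case: sW | rewrite subr0 normr0 mul0r].
pose s := 2 * `|y| / mu.
have s0 : 0 < s by rewrite !mulr_gt0 ?invr_gt0 ?normr_gt0.
have ys : `|s^-1 *: y| = mu / 2.
  by rewrite normrZ gtr0_norm ?invr_gt0 // /s; field; rewrite normr_eq0 y0 gt_eqF.
have [|a sa_a ya] := net (s^-1 *: y); first by apply: Lmu; rewrite ys; lra.
have [k Kk yak] := qnorm_lt subspaceK _ _ ya.
exists (s *: (a + k)).
  apply: subspaceZ => //; apply: subspaceD => //.
    by apply: seq_span_mem; rewrite mem_cat sa_a.
  move: Kk; rewrite Kspan; apply: seq_span_min => // u sk_u.
  by apply: seq_span_mem; rewrite mem_cat sk_u orbT.
have -> : y - s *: (a + k) = s *: (s^-1 *: y - a - k).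
  by rewrite -addrA -opprD scalerBr scalerA divff ?gt_eqF // scale1r.
rewrite normrZ gtr0_norm //.
have -> : `|y| / 2 = s * (mu / 4) by rewrite /s; field; rewrite gt_eqF.
by rewrite ler_pM2l // ltW.
Qed.

Lemma fin_dim_seminorm_domain : fin_dim [set: A].
Proof.
have [s half] := seminorm_halving_span.
have -> : [set: A] = seq_span s.
  apply/esym/subspace_halving_eqT => //.
  - exact: subspace_seq_span.
  - exact: closed_seq_span.
exact: fin_dim_seq_span.
Qed.

End SeminormWithCompactUnitBall.

Theorem theorem2p1 (R : realType) (A : completeNormedModType R)
    (D : set A) (L : A -> R) :
  is_subspace D -> dense D -> seminorm_on D L ->
  fin_dim [set a | D a /\ L a = 0] ->
  qcompact [set a | D a /\ L a = 0] [set a | D a /\ L a <= 1] ->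
  (fin_dim [set: A] <-> D = [set: A]).
Proof.
move=> sD dD [LD LZ] finK cptB; split=> [finA | DT].
  have finD := fin_dim_subspace sD (@subsetT _ D) finA.
  exact: closed_dense_eqT (closed_fin_dim sD finD) dD.
subst D; have setT_and (P : A -> Prop) : [set a | [set: A] a /\ P a] = [set a | P a].
  by apply/seteqP; split=> a //= [].
rewrite (setT_and (fun a => L a = 0)) (setT_and (fun a => L a <= 1)) in finK cptB.
by apply: fin_dim_seminorm_domain finK cptB => [x y | a x]; [apply: LD | apply: LZ].
Qed.
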